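(* Let $N=p^nN_1$ with $n\ge2$, $p\ge3$ prime, and $N_1=q_1q_2\cdots q_r$ where $q_1,\dots,q_r$ are distinct primes, different from $p$, with $p-1\equiv0\pmod{q_i-1}$ for all $i$. Let $u$ be an integer with $\gcd(u,N)=1$, and let $d,m\in\mathbb{Z}_N$. Define $h_d(k)=\big((k+d)^p-k^p-d^p\big)m+udk$. Then $h_d(k)/\gcd(d,N)$ is a permutation polynomial over $\mathbb{Z}_{N/\gcd(d,N)}$.
   Context: A polynomial $g$ (integer-valued) is a permutation polynomial over $\mathbb{Z}_M$ if $k\mapsto g(k)\bmod M$ is a bijection of $\mathbb{Z}_M=\{0,\dots,M-1\}$; $\gcd(0,N)=N$. *)

From mathcomp Require Import all_boot all_order all_algebra.
Set Implicit Arguments. Unset Strict Implicit. Unset Printing Implicit Defensive.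
Import Order.TTheory GRing.Theory Num.Theory.
Local Open Scope ring_scope.

Definition perm_poly_mod (M : int) (f : int -> int) : Prop :=
  (forall k1 k2 : int, 0 <= k1 < M -> 0 <= k2 < M ->
      (f k1 = f k2 %[mod M])%Z -> k1 = k2) /\
  (forall y : int, 0 <= y < M -> exists2 k : int, 0 <= k < M & (f k = y %[mod M])%Z).

Definition hd (p : nat) (u d m : int) (k : int) : int :=
  ((k + d) ^+ p - k ^+ p - d ^+ p) * m + u * d * k.

From mathcomp Require Import all_boot all_order all_algebra all_field ring zify.
Import Order.TTheory GRing.Theory Num.Theory.
Local Open Scope ring_scope.

(* By the binomial theorem, hd k1 - hd k2 = (k1 - k2) d (u + p T m) for some
   integer T, and u + p T m is prime to p because u is; so p^n | hd k1 - hd k2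
   forces p^n | (k1 - k2) d.  For each q, x^p = x (mod q) since q - 1 | p - 1,
   so hd k = u d k (mod q) and q | hd k1 - hd k2 forces q | (k1 - k2) d.
   Hence N | hd k1 - hd k2 implies N / gcd(d, N) | k1 - k2.  As gcd(d, N)
   divides every hd k, k |-> hd k / gcd(d, N) is injective, hence bijective,
   on Z_(N / gcd(d, N)). *)

Lemma expf_id_dvd_card (F : finFieldType) (x : F) (k : nat) :
  (0 < k)%N -> (#|F|.-1 %| k.-1)%N -> x ^+ k = x.
Proof.
move=> k_gt0 /dvdnP[t def_k]; rewrite -(prednK k_gt0) def_k.
have F_gt0 : (0 < #|F|)%N by apply/card_gt0P; exists x.
have x_cycle : x ^+ #|F|.-1 * x = x by rewrite -exprSr prednK ?expf_card.
elim: t {def_k} => [|t IHt]; first by rewrite expr1.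
by rewrite mulSn exprSr exprD -mulrA -exprSr IHt x_cycle.
Qed.

Lemma dvdz_expr_sub (q p : nat) (x : int) :
  prime q -> (0 < p)%N -> (q - 1 %| p - 1)%N -> (q%:Z %| x ^+ p - x)%Z.
Proof.
move=> q_pr p_gt0 qp1; rewrite (dvdz_pcharf (pchar_Fp q_pr)) rmorphB rmorphXn subr_eq0.
by rewrite expf_id_dvd_card // card_Fp // -!subn1.
Qed.

Lemma dvdz_div_gcdz (N d x : int) :
  N != 0 -> (N %| x * d)%Z -> ((N %/ gcdz d N)%Z %| x)%Z.
Proof.
move=> N_neq0 N_dvd; set g := gcdz d N.
have g_neq0 : g != 0 by rewrite gcdz_eq0 negb_and N_neq0 orbT.
have cop : coprimez (N %/ g)%Z (d %/ g)%Z.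
  have : gcdz (N %/ g)%Z (d %/ g)%Z * `|g|%:Z = g * 1.
    by rewrite mulz_gcdl !divzK ?dvdz_gcdl ?dvdz_gcdr // gcdzC mulr1.
  by rewrite gez0_abs // mulrC => /(mulfI g_neq0)/eqP.
rewrite -(Gauss_dvdzl _ cop) -(dvdz_mul2r g_neq0) -mulrA.
by rewrite !divzK ?dvdz_gcdl ?dvdz_gcdr.
Qed.

Definition binom_middle (p : nat) (d k : int) : int := (k + d) ^+ p - k ^+ p - d ^+ p.

Lemma dvdz_binom_middle_sub (p : nat) (d k1 k2 : int) : prime p ->
  (p%:Z * d * (k1 - k2) %| binom_middle p d k1 - binom_middle p d k2)%Z.
Proof.
move=> p_pr; have expand k : (k + d) ^+ p - k ^+ p =
    \sum_(i < p) (k ^+ (p - i.+1) * d ^+ i.+1) *+ 'C(p, i.+1).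
  by rewrite exprDn big_ord_recl subn0 expr0 mulr1 bin0 addrC addKr.
have -> : binom_middle p d k1 - binom_middle p d k2 =
    ((k1 + d) ^+ p - k1 ^+ p) - ((k2 + d) ^+ p - k2 ^+ p) by rewrite /binom_middle; ring.
rewrite !expand -sumrB; apply: rpred_sum => i _.
rewrite -mulrnBl -mulrBl.
have [i_lt|i_eq] : (i.+1 < p)%N \/ i.+1 = p.
  by have := ltn_ord i; rewrite leq_eqVlt => /orP[/eqP|]; [right|left].
- have /dvdnP[c ->] : (p %| 'C(p, i.+1))%N by rewrite prime_dvd_bin.
  rewrite subrXX exprS -mulr_natr natrM.
  set s := \sum_(_ < _) _.
  have -> : (k1 - k2) * s * (d * d ^+ i) * (c%:R * p%:R)
     = (p%:Z * d * (k1 - k2)) * (s * d ^+ i * c%:R) by ring.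
  exact: dvdz_mulr.
- by rewrite i_eq subnn !expr0 subrr mul0r mul0rn rpred0.
Qed.

Lemma eqz_mod_divz (M g a b : int) : g != 0 -> (g %| a)%Z -> (g %| b)%Z ->
  ((a %/ g)%Z == (b %/ g)%Z %[mod M])%Z = (a == b %[mod M * g])%Z.
Proof.
by move=> g_neq0 g_a g_b; rewrite !eqz_mod_dvd -(dvdz_mul2r g_neq0) mulrBl !divzK.
Qed.

Lemma coprime_prod_primes (a : nat) (qs : seq nat) :
  prime a -> all prime qs -> a \notin qs -> coprime a (\prod_(q <- qs) q).
Proof.
move=> a_pr; elim: qs => [|q qs IHqs]; first by rewrite big_nil coprimen1.
rewrite big_cons in_cons negb_or => /andP[q_pr qs_pr] /andP[a_neq_q a_qs].
by rewrite coprimeMr IHqs // andbT prime_coprime // dvdn_prime2.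
Qed.

Lemma prod_uniq_primes_dvdn (qs : seq nat) (x : nat) : uniq qs -> all prime qs ->
  {in qs, forall q, q %| x}%N -> (\prod_(q <- qs) q %| x)%N.
Proof.
elim: qs => [|q qs IHqs]; first by rewrite big_nil dvd1n.
move=> /andP[q_qs qs_uniq] /andP[q_pr qs_pr] qs_dvd; rewrite big_cons.
rewrite Gauss_dvd ?coprime_prod_primes // qs_dvd ?mem_head // IHqs // => r r_qs.
by rewrite qs_dvd // in_cons r_qs orbT.
Qed.

Section Hd.

Variables (p : nat) (u d m : int).
Hypothesis p_pr : prime p.

Lemma hd_sub_factor (k1 k2 : int) : exists T : int,
  hd p u d m k1 - hd p u d m k2 = (k1 - k2) * d * (u + p%:Z * T * m).
Proof.
have /dvdzP[T defT] := dvdz_binom_middle_sub p d k1 k2 p_pr; exists T.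
have -> : hd p u d m k1 - hd p u d m k2 =
    (binom_middle p d k1 - binom_middle p d k2) * m + u * d * (k1 - k2).
  by rewrite /hd /binom_middle; ring.
by rewrite defT; ring.
Qed.

Lemma dvdz_hd (k : int) : (d %| hd p u d m k)%Z.
Proof.
have hd0 : hd p u d m 0 = 0.
  by rewrite /hd add0r expr0n gtn_eqF ?prime_gt0 // subr0 subrr !mul0r mulr0 addr0.
have [T] := hd_sub_factor k 0; rewrite hd0 subr0 => ->.
by rewrite -mulrA dvdz_mull // dvdz_mulr.
Qed.

Lemma dvdz_hd_sub_pexpn (e : nat) (k1 k2 : int) : coprimez p u ->
  ((p ^ e)%:Z %| hd p u d m k1 - hd p u d m k2)%Z -> ((p ^ e)%:Z %| (k1 - k2) * d)%Z.
Proof.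
move=> p_u; have [T ->] := hd_sub_factor k1 k2.
have p_w : coprimez (p ^ e)%N (u + p%:Z * T * m).
  rewrite coprimezE absz_nat coprimeXl //; change (coprimez p (u + p%:Z * T * m)).
  have -> : u + p%:Z * T * m = T * m * p%:Z + u by ring.
  by rewrite /coprimez gcdzMDl.
by rewrite (Gauss_dvdzl _ p_w).
Qed.

Lemma dvdz_hd_sub_linear (q : nat) (k : int) : prime q -> (q - 1 %| p - 1)%N ->
  (q%:Z %| hd p u d m k - u * d * k)%Z.
Proof.
move=> q_pr q_p1; have p_gt0 := prime_gt0 p_pr.
have -> : hd p u d m k - u * d * k =
    (((k + d) ^+ p - (k + d)) - (k ^+ p - k) - (d ^+ p - d)) * m by rewrite /hd; ring.
by apply/dvdz_mulr/rpredB; first apply: rpredB; apply: dvdz_expr_sub.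
Qed.

Lemma dvdz_hd_sub_prime (q : nat) (k1 k2 : int) :
  prime q -> (q - 1 %| p - 1)%N -> coprimez q u ->
  (q%:Z %| hd p u d m k1 - hd p u d m k2)%Z -> (q%:Z %| (k1 - k2) * d)%Z.
Proof.
move=> q_pr q_p1 q_u q_dvd; rewrite -(Gauss_dvdzr _ q_u).
have -> : u * ((k1 - k2) * d) = (hd p u d m k1 - hd p u d m k2)
    - ((hd p u d m k1 - u * d * k1) - (hd p u d m k2 - u * d * k2)) by ring.
by rewrite rpredB // rpredB // dvdz_hd_sub_linear.
Qed.

Lemma dvdz_hd_sub (n : nat) (qs : seq nat) (k1 k2 : int) :
  let N := (p ^ n * \prod_(q <- qs) q)%N in
  (0 < n)%N -> uniq qs -> all prime qs -> p \notin qs ->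
  all (fun q => q - 1 %| p - 1)%N qs -> coprimez u N ->
  (N%:Z %| hd p u d m k1 - hd p u d m k2)%Z -> (N%:Z %| (k1 - k2) * d)%Z.
Proof.
move=> N n_gt0 qs_uniq qs_pr p_qs qs_p1 u_N N_dvd.
have divisor_dvd x : (x %| N)%N -> (x%:Z %| hd p u d m k1 - hd p u d m k2)%Z.
  by move=> x_N; apply: dvdz_trans N_dvd.
have divisor_coprime x : (x %| N)%N -> coprimez x u.
  by move=> x_N; rewrite coprimez_sym in u_N; apply: coprimez_dvdl x_N u_N.
rewrite dvdzE Gauss_dvd ?coprimeXl ?coprime_prod_primes //; apply/andP; split.
  apply: dvdz_hd_sub_pexpn; last exact/divisor_dvd/dvdn_mulr.
  by apply/divisor_coprime/dvdn_mulr; rewrite dvdn_exp.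
apply: prod_uniq_primes_dvdn => // q q_qs.
have q_N : (q %| N)%N by rewrite dvdn_mull // (big_rem q q_qs) dvdn_mulr.
apply: dvdz_hd_sub_prime; rewrite ?divisor_dvd ?divisor_coprime //.
- exact: (allP qs_pr q q_qs).
- exact: (allP qs_p1 q q_qs).
Qed.

End Hd.

Lemma perm_poly_mod_of_inj (M : int) (f : int -> int) : 0 < M ->
  (forall k1 k2 : int, 0 <= k1 < M -> 0 <= k2 < M -> (f k1 = f k2 %[mod M])%Z -> k1 = k2) ->
  perm_poly_mod M f.
Proof.
move=> M_gt0 f_inj; split=> // y /andP[y_ge0 y_lt].
have M_neq0 : M != 0 by rewrite gt_eqF.
have res_lt z : (`|(z %% M)%Z| < `|M|)%N.
  by have := modz_ge0 z M_neq0; have := ltz_pmod z M_gt0; lia.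
pose F (i : 'I_`|M|) := Ordinal (res_lt (f i)).
have F_inj : injective F.
  move=> i j /(congr1 val) /= Fij; apply/ord_inj/eqP; rewrite -eqz_nat; apply/eqP.
  apply: f_inj; [have := ltn_ord i; lia | have := ltn_ord j; lia |].
  by rewrite -[LHS]gez0_abs ?modz_ge0 // Fij gez0_abs ?modz_ge0.
have y_lt' : (`|y| < `|M|)%N by lia.
have [G _ GK] := injF_bij F_inj.
have /(congr1 val) /= Fi := GK (Ordinal y_lt'); set i := G _ in Fi.
exists (nat_of_ord i); first by have := ltn_ord i; lia.
by rewrite (modz_small (m := y)) //; have := modz_ge0 (f i) M_neq0; lia.
Qed.

Theorem lemma11 (p n : nat) (qs : seq nat) (u d m : int) :
  prime p -> (3 <= p)%N -> (2 <= n)%N ->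
  (0 < size qs)%N -> uniq qs -> all prime qs -> p \notin qs ->
  all (fun q => (q - 1 %| p - 1)%N) qs ->
  let N : nat := (p ^ n * \prod_(q <- qs) q)%N in
  coprimez u N%:Z ->
  0 <= d < N%:Z -> 0 <= m < N%:Z ->
  let g : int := gcdz d N%:Z in
  perm_poly_mod (N%:Z %/ g)%Z (fun k => (hd p u d m k %/ g)%Z).
Proof.
move=> p_pr _ n_ge2 _ qs_uniq qs_pr p_qs qs_p1 N u_N _ _ g.
have N_gt0 : (0 < N)%N.
  rewrite muln_gt0 expn_gt0 prime_gt0 //= big_seq prodn_cond_gt0 // => q.
  by move/(allP qs_pr)/prime_gt0.
have g_neq0 : g != 0 by rewrite gcdz_eq0 negb_and -lt0n N_gt0 orbT.
have g_gt0 : 0 < g by rewrite lt_def g_neq0.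
have g_hd k : (g %| hd p u d m k)%Z := dvdz_trans (dvdz_gcdl d N) (dvdz_hd p u d m p_pr k).
have defN : (N%:Z %/ g)%Z * g = N%:Z by rewrite divzK ?dvdz_gcdr.
apply: perm_poly_mod_of_inj => [|k1 k2 /andP[k1_ge0 k1_lt] /andP[k2_ge0 k2_lt]].
  by rewrite -(pmulr_lgt0 _ g_gt0) defN.
move/eqP; rewrite eqz_mod_divz ?g_hd // defN eqz_mod_dvd.
move/(dvdz_hd_sub p u d m p_pr n qs k1 k2 (ltnW n_ge2) qs_uniq qs_pr p_qs qs_p1 u_N).
move/dvdz_div_gcdz; rewrite -eqz_mod_dvd -/g eqz_nat => /(_ (lt0n_neq0 N_gt0))/eqP.
by rewrite !modz_small ?k1_ge0 ?k2_ge0.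
Qed.
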